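(* Let $\lambda>0$ be a random variable with density $\pi(\lambda)$ on $(0,\infty)$, and let $\beta\mid\lambda\sim\mathcal{N}(0,\lambda)$ (variance $\lambda$), so that $\beta$ has marginal density $\pi(\beta)=\int_0^\infty \pi(\beta\mid\lambda)\pi(\lambda)\,d\lambda$. Then $\pi(\beta)$ is heavy-tailed if and only if $\pi(\lambda)$ is heavy-tailed.
   Context: A density $f$ (on $\mathbb{R}$, or on $(0,\infty)$ extended by zero) is heavy-tailed if $\int f(x)e^{tx}\,dx=\infty$ for all $t>0$. *)

From HB Require Import structures.
From mathcomp Require Import all_boot all_order all_algebra.
From mathcomp Require Import all_classical all_reals all_analysis.
Set Implicit Arguments. Unset Strict Implicit. Unset Printing Implicit Defensive.
Import Order.TTheory GRing.Theory Num.Theory.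
Local Open Scope classical_set_scope.
Local Open Scope ring_scope.
Local Open Scope ereal_scope.

Section defs.
Context {R : realType}.

Definition heavy_tailed (g : R -> \bar R) : Prop :=
  forall t : R, (0 < t)%R ->
    \int[lebesgue_measure]_(x in [set: R]) (g x * (expR (t * x))%:E) = +oo.

Definition ext_by_zero (f : R -> R) : R -> \bar R :=
  fun x => if (0 < x)%R then (f x)%:E else 0.

(* Marginal density of beta when lambda has density f on (0,oo) and
   beta | lambda ~ N(0, lambda) (variance lambda, i.e. std sqrt lambda):
   pi(beta) = int_0^oo pi(beta | lambda) pi(lambda) d lambda. *)
Definition marginal_density (f : R -> R) (b : R) : \bar R :=
  \int[lebesgue_measure]_(l in `]0%R, +oo[)
     (normal_pdf 0 (Num.sqrt l) b * f l)%:E.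

End defs.

From HB Require Import structures.
From mathcomp Require Import all_boot all_order all_algebra.
From mathcomp Require Import all_classical all_reals all_analysis.
From mathcomp Require Import measurable_realfun ring.
Import Order.TTheory GRing.Theory Num.Theory.
Import numFieldNormedType.Exports.
Local Open Scope classical_set_scope.
Local Open Scope ring_scope.

(* Conditionally on [lambda = l > 0], the moment generating function of the
   centred Gaussian [beta] is [E[e^(t beta)] = e^(t^2 l / 2)]; by Tonelli,
   [int pi(b) e^(t b) db = int pi(l) e^(t^2 l / 2) dl] for every real [t].
   Since [t |-> t^2 / 2] maps [(0, oo)] onto itself, the left-hand side is
   infinite for all [t > 0] iff the right-hand side is. *)

Section gaussian_mgf.
Context {R : realType}.
Implicit Types m s t x : R.

Lemma normal_pdf_expR m s t x : s != 0 ->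
  normal_pdf m s x * expR (t * x) =
  expR (t * m + t ^+ 2 * s ^+ 2 / 2) * normal_pdf (m + t * s ^+ 2) s x.
Proof.
move=> s0; rewrite !normal_pdfE //= /normal_fun.
rewrite -[LHS]mulrA [RHS]mulrCA -!expRD; congr (_ * expR _).
by field.
Qed.

Lemma integral_normal_pdf_expR m s t : s != 0 ->
  (\int[lebesgue_measure]_x (normal_pdf m s x * expR (t * x))%:E =
   (expR (t * m + t ^+ 2 * s ^+ 2 / 2))%:E)%E.
Proof.
move=> s0; under eq_integral do rewrite normal_pdf_expR // EFinM.
rewrite ge0_integralZl //= ?integral_normal_pdf ?mule1 ?lee_fin ?expR_ge0 //.
- by apply/measurable_EFinP; exact: measurable_normal_pdf.
- by move=> x _; rewrite lee_fin normal_pdf_ge0.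
Qed.

End gaussian_mgf.

Section gauss_kernel.
Context {R : realType}.

Lemma measurable_funV_ge0 d (T : measurableType d) (h : T -> R) :
  measurable_fun setT h -> (forall x, 0 <= h x) ->
  measurable_fun setT (fun x => (h x)^-1).
Proof.
move=> mh h_ge0; rewrite (_ : (fun x => _) = (fun x => h x `^ (-1))).
  exact: measurableT_comp (measurable_powR _) mh.
by apply/funext => x; rewrite powR_inv1.
Qed.

Lemma measurable_sqrt : measurable_fun setT (@Num.sqrt R).
Proof. exact: continuous_measurable_fun (@sqrt_continuous R). Qed.

Lemma measurable_normal_peak : measurable_fun setT (@normal_peak R).
Proof.
apply: measurable_funV_ge0 => [|s]; last exact: sqrtr_ge0.
apply: measurableT_comp measurable_sqrt _.
apply: measurableT_comp (@natmul_measurable R setT 2) _.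
by apply: measurable_funM => //; exact: measurable_funX.
Qed.

Lemma measurable_normal_fun2 (m : R) :
  measurable_fun setT (fun p : R * R => normal_fun m p.1 p.2).
Proof.
rewrite /normal_fun; apply: measurableT_comp (@measurable_expR R) _.
apply: measurable_funM.
  apply: measurable_funN; apply: measurable_funX.
  exact: measurable_funB measurable_snd (measurable_cst _).
apply: measurable_funV_ge0 => [|p]; last by rewrite mulrn_wge0 ?sqr_ge0.
apply: measurableT_comp (@natmul_measurable R setT 2) _.
exact: measurable_funX measurable_fst.
Qed.

(* [normal_pdf 0 (sqrt l)] without the special case [s = 0] of [normal_pdf],
   so that joint measurability in [(l, b)] follows by composition. *)
Definition gauss_kernel (l b : R) : R :=
  normal_peak (Num.sqrt l) * normal_fun 0 (Num.sqrt l) b.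

Lemma gauss_kernelE l b : 0 < l -> gauss_kernel l b = normal_pdf 0 (Num.sqrt l) b.
Proof. by move=> l0; rewrite normal_pdfE // gt_eqF // sqrtr_gt0. Qed.

Lemma gauss_kernel_ge0 l b : 0 <= gauss_kernel l b.
Proof. by rewrite mulr_ge0 ?normal_peak_ge0 ?normal_fun_ge0. Qed.

Lemma measurable_gauss_kernel :
  measurable_fun setT (fun p : R * R => gauss_kernel p.1 p.2).
Proof.
have msqrt1 : measurable_fun setT (fun p : R * R => Num.sqrt p.1).
  exact: measurableT_comp measurable_sqrt measurable_fst.
rewrite /gauss_kernel; apply: measurable_funM.
  exact: measurableT_comp measurable_normal_peak msqrt1.
apply: (measurableT_comp (measurable_normal_fun2 0)
  (measurable_fun_pair msqrt1 measurable_snd)).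
Qed.

Lemma integral_gauss_kernel_expR l t : 0 < l ->
  (\int[lebesgue_measure]_b (gauss_kernel l b * expR (t * b))%:E =
   (expR (t ^+ 2 / 2 * l))%:E)%E.
Proof.
move=> l0; under eq_integral do rewrite gauss_kernelE //.
rewrite integral_normal_pdf_expR ?gt_eqF ?sqrtr_gt0 // sqr_sqrtr ?ltW //.
by rewrite mulr0 add0r mulrAC.
Qed.

End gauss_kernel.

Section marginal_density_mgf.
Context {R : realType}.
Variable f : R -> R.
Hypothesis f_meas : measurable_fun (`]0%R, +oo[ : set R) f.
Hypothesis f_ge0 : forall l, 0 < l -> 0 <= f l.
Local Notation mu := (@lebesgue_measure R).

Let F : R -> R := f \_ (`]0%R, +oo[ : set R).

Let in_itv_gt0 (l : R) : (l \in `]0%R, +oo[%classic) = (0 < l).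
Proof. by rewrite mem_setE /= in_itv /= andbT. Qed.

Let FE l : F l = if 0 < l then f l else 0.
Proof. by rewrite /F patchE in_itv_gt0. Qed.

Let F_ge0 l : 0 <= F l.
Proof. by rewrite FE; case: ifPn => // /f_ge0. Qed.

Let measurable_F : measurable_fun setT F.
Proof. by rewrite /F -measurable_restrictT. Qed.

Let ext_by_zeroE l : ext_by_zero f l = (F l)%:E.
Proof. by rewrite FE /ext_by_zero; case: ifP. Qed.

Lemma marginal_densityE b :
  marginal_density f b = (\int[mu]_l (F l * gauss_kernel l b)%:E)%E.
Proof.
rewrite /marginal_density integral_mkcond; apply: eq_integral => l _.
rewrite patchE in_itv_gt0 FE; case: ifPn => [l0|_]; last by rewrite mul0r.
by rewrite mulrC gauss_kernelE.
Qed.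

Lemma integral_marginal_density_expR t :
  (\int[mu]_(x in [set: R]) (marginal_density f x * (expR (t * x))%:E) =
   \int[mu]_(x in [set: R]) (ext_by_zero f x * (expR (t ^+ 2 / 2 * x))%:E))%E.
Proof.
pose h p := (F p.1 * gauss_kernel p.1 p.2 * expR (t * p.2))%:E.
have mh : measurable_fun setT h.
  apply/measurable_EFinP; apply: measurable_funM.
    apply: measurable_funM; last exact: measurable_gauss_kernel.
    exact: measurableT_comp measurable_F measurable_fst.
  apply: measurableT_comp (@measurable_expR R) _.
  exact: measurable_funM measurable_snd.
have h_ge0 p : (0 <= h p)%E.
  by rewrite lee_fin mulr_ge0 ?expR_ge0 // mulr_ge0 ?gauss_kernel_ge0.
transitivity (\int[mu]_b \int[mu]_l h (l, b))%E.
  apply: eq_integral => b _; rewrite marginal_densityE -ge0_integralZr //=.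
  - apply/measurable_EFinP; apply: measurable_funM => //.
    exact: measurable_fun_pair1 b measurable_gauss_kernel.
  - by move=> l _; rewrite lee_fin mulr_ge0 ?F_ge0 ?gauss_kernel_ge0.
rewrite -(@fubini_tonelli _ _ _ _ _ mu mu h mh h_ge0); apply: eq_integral => l _.
rewrite ext_by_zeroE; have [l0|l0] := ltP 0 l.
  transitivity (\int[mu]_b ((F l)%:E * (gauss_kernel l b * expR (t * b))%:E))%E.
    by apply: eq_integral => b _; rewrite /h /= -mulrA EFinM.
  rewrite ge0_integralZl ?lee_fin ?F_ge0 ?integral_gauss_kernel_expR //.
  - apply/measurable_EFinP; apply: measurable_funM.
      exact: measurable_fun_pair2 l measurable_gauss_kernel.
    exact: measurableT_comp (@measurable_expR R) (measurable_funM _ _).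
  - by move=> b _; rewrite lee_fin mulr_ge0 ?gauss_kernel_ge0 ?expR_ge0.
have Fl : F l = 0 by rewrite FE ltNge l0.
by rewrite Fl mul0e integral0_eq // => b _; rewrite /h /= Fl !mul0r.
Qed.

End marginal_density_mgf.

Lemma heavy_tailed_half_sqr_rescale {R : realType} (g h : R -> \bar R) :
  (forall t, \int[lebesgue_measure]_(x in [set: R]) (g x * (expR (t * x))%:E) =
   \int[lebesgue_measure]_(x in [set: R]) (h x * (expR (t ^+ 2 / 2 * x))%:E))%E ->
  heavy_tailed g <-> heavy_tailed h.
Proof.
move=> gh; split => ht s s0.
  have t0 : 0 < Num.sqrt (s *+ 2) by rewrite sqrtr_gt0 mulrn_wgt0.
  have s2K : s *+ 2 / 2 = s by rewrite -[s *+ 2]mulr_natr mulfK ?pnatr_eq0.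
  by have := ht _ t0; rewrite gh sqr_sqrtr ?mulrn_wge0 ?ltW // s2K.
by rewrite gh; apply: ht; rewrite mulr_gt0 ?exprn_gt0.
Qed.

Theorem lemma1 (R : realType) (f : R -> R)
  (f_meas : measurable_fun (`]0%R, +oo[ : set R) f)
  (f_ge0 : forall l : R, 0 < l -> 0 <= f l)
  (f_int1 : (\int[lebesgue_measure]_(l in `]0%R, +oo[) (f l)%:E = 1)%E) :
  heavy_tailed (marginal_density f) <-> heavy_tailed (ext_by_zero f).
Proof.
apply: heavy_tailed_half_sqr_rescale => t.
exact: integral_marginal_density_expR.
Qed.
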